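(* Let $E$ be a graph and $k$ a field. If any two irreducible representations of $L_k(E)$ are algebraically equivalent, then $E$ has no cycles.
   Context: A graph $E=(E^0,E^1,r,s)$ has vertex set $E^0$, edge set $E^1$, range and source maps; no countability assumed. A vertex is regular if it emits a finite nonzero number of edges. A cycle is a path $e_1\cdots e_n$ ($n\ge1$, $r(e_i)=s(e_{i+1})$) with $s(e_1)=r(e_n)$. $L_k(E)$ is the universal $k$-algebra generated by pairwise orthogonal idempotents $p_v$ ($v\in E^0$) and elements $s_e,s_e^*$ ($e\in E^1$) with $p_{s(e)}s_e=s_e=s_ep_{r(e)}$, $p_{r(e)}s_e^*=s_e^*=s_e^*p_{s(e)}$, $s_e^*s_f=\delta_{e,f}p_{r(e)}$, and $p_v=\sum_{s(e)=v}s_es_e^*$ for each regular $v$. Representations $\rho_i:L_k(E)\to\mathrm{End}_k(V_i)$ are algebraically equivalent if $\rho_1(a)=T^{-1}\rho_2(a)T$ for all $a$ for some linear isomorphism $T:V_1\to V_2$; irreducible means the only invariant subspaces are $0$ and the whole space. *)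

From HB Require Import structures.
From mathcomp Require Import all_boot all_algebra.
From Stdlib Require Import List.
Set Implicit Arguments. Unset Strict Implicit. Unset Printing Implicit Defensive.
Import GRing.Theory.
Local Open Scope ring_scope.

(* A directed graph E = (E^0, E^1, r, s); no countability assumed. *)
Record graph := Graph {
  vert : Type;
  edge : Type;
  rg : edge -> vert;
  sc : edge -> vert }.

Section LPA.
Variables (E : graph) (k : fieldType).

Definition emits_list (v : vert E) (l : list (edge E)) : Prop :=
  NoDup l /\ (forall e, In e l <-> sc e = v).

Definition regular (v : vert E) : Prop :=
  exists l, l <> nil /\ emits_list v l.

Definition has_cycle : Prop :=
  exists (n : nat) (f : nat -> edge E), (0 < n)%N /\
    (forall i, (i.+1 < n)%N -> rg (f i) = sc (f i.+1)) /\
    sc (f 0%N) = rg (f n.-1).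

(* By the universal property of
   L_k(E), such an algebra homomorphism is the same as the assignment of
   k-linear operators rho(p_v), rho(s_e), rho(s_e^* ) satisfying the defining
   relations. *)
Record lpa_rep (V : lmodType k) := LpaRep {
  rP  : vert E -> {linear V -> V};
  rS  : edge E -> {linear V -> V};
  rSs : edge E -> {linear V -> V};
  rP_idem : forall v x, rP v (rP v x) = rP v x;
  rP_orth : forall v w x, v <> w -> rP v (rP w x) = 0;
  rS_src : forall e x, rP (sc e) (rS e x) = rS e x;
  rS_rg  : forall e x, rS e (rP (rg e) x) = rS e x;
  rSs_rg : forall e x, rP (rg e) (rSs e x) = rSs e x;
  rSs_src : forall e x, rSs e (rP (sc e) x) = rSs e x;
  rCK1 : forall e x, rSs e (rS e x) = rP (rg e) x;
  rCK0 : forall e f x, e <> f -> rSs e (rS f x) = 0;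
  rCK2 : forall v l x, l <> nil -> emits_list v l ->
           rP v x = \sum_(e <- l) rS e (rSs e x) }.

(* Formal expressions in the generators of L_k(E); every element of L_k(E)
   is the class of such an expression. *)
Inductive lterm :=
  | Tp of vert E
  | Ts of edge E
  | Tst of edge E
  | T0
  | Tadd of lterm & lterm
  | Tscale of k & lterm
  | Tmul of lterm & lterm.

Fixpoint rep_eval (V : lmodType k) (rho : lpa_rep V) (a : lterm) : V -> V :=
  match a with
  | Tp v => rP rho v
  | Ts e => rS rho e
  | Tst e => rSs rho e
  | T0 => fun _ => 0
  | Tadd a b => fun x => rep_eval rho a x + rep_eval rho b x
  | Tscale c a => fun x => c *: rep_eval rho a x
  | Tmul a b => fun x => rep_eval rho a (rep_eval rho b x)
  end.

Definition subspace (V : lmodType k) (W : V -> Prop) : Prop :=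
  W 0 /\ (forall x y, W x -> W y -> W (x + y)) /\
  (forall (c : k) x, W x -> W (c *: x)).

Definition invariant (V : lmodType k) (rho : lpa_rep V) (W : V -> Prop) : Prop :=
  forall a x, W x -> W (rep_eval rho a x).

Definition irreducible (V : lmodType k) (rho : lpa_rep V) : Prop :=
  (exists a x, rep_eval rho a x <> 0) /\
  forall W, subspace W -> invariant rho W ->
    (forall x, W x -> x = 0) \/ (forall x, W x).

Definition alg_equiv (V1 V2 : lmodType k) (rho1 : lpa_rep V1)
    (rho2 : lpa_rep V2) : Prop :=
  exists (T : {linear V1 -> V2}) (Ti : {linear V2 -> V1}),
    cancel T Ti /\ cancel Ti T /\
    forall a x, rep_eval rho1 a x = Ti (rep_eval rho2 a (T x)).

End LPA.

(* Suppose E has a cycle; unrolling it gives an infinite path c with least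
   period d.  For a k-vector space K with an automorphism M, the twisted Chen
   module consists of finitely supported K-valued functions on the infinite
   paths tail-equivalent to c; s_e prepends e and applies M when the result is
   c.  If the only M-stable subspaces of K are 0 and K, this module is
   irreducible: the s_e^* isolate a single vector delta_p b, tail equivalence
   carries it to c, the cycle operator s_(c 0) ... s_(c (d-1)), which maps
   delta_c b to delta_c (M b), spreads it over K, and then back to every path.
   The cycle operator fixes delta_c 1 in the untwisted module (K = k, M = id)
   but has no nonzero fixed vector when M has none, so the two irreducible
   modules are not equivalent.  Such an M exists over every field: scaling by
   some a <> 0, 1, or over F_2 the map (x, y) |-> (y, x + y) on k^2. *)

From HB Require Import structures.
From mathcomp Require Import all_boot all_algebra.
From mathcomp Require Import boolp zify.
From Stdlib Require Import List.

Set Implicit Arguments.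
Unset Strict Implicit.
Unset Printing Implicit Defensive.
Import GRing.Theory.
Local Open Scope ring_scope.

Section InfinitePaths.
Variable E : graph.

Definition ipath := nat -> edge E.

Definition is_ipath (q : ipath) := forall i, rg (q i) = sc (q i.+1).

Definition ptail (q : ipath) : ipath := fun i => q i.+1.
Definition pcons (e : edge E) (q : ipath) : ipath :=
  fun i => if i is j.+1 then q j else e.
Definition pdrop (j : nat) (q : ipath) : ipath := fun i => q (i + j)%N.

Definition tail_equiv (p q : ipath) := exists a b, pdrop a p = pdrop b q.

Lemma pcons_ptail q : pcons (q 0%N) (ptail q) = q.
Proof. by apply: funext; case. Qed.

Lemma pdrop0 q : pdrop 0 q = q.
Proof. by apply: funext => i; rewrite /pdrop addn0. Qed.

Lemma ptail_pdrop j q : ptail (pdrop j q) = pdrop j.+1 q.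
Proof. by apply: funext => i; rewrite /ptail /pdrop addSn addnS. Qed.

Lemma pdrop_ptail j q : pdrop j (ptail q) = pdrop j.+1 q.
Proof. by apply: funext => i; rewrite /ptail /pdrop addnS. Qed.

Lemma pdropS_pcons j e q : pdrop j.+1 (pcons e q) = pdrop j q.
Proof. by apply: funext => i; rewrite /pdrop addnS. Qed.

Lemma pcons_pdrop j q : pcons (q j) (pdrop j.+1 q) = pdrop j q.
Proof. by rewrite -ptail_pdrop -{1}(add0n j) pcons_ptail. Qed.

Lemma pdrop_sub j q i : (j <= i)%N -> pdrop j q (i - j)%N = q i.
Proof. by move=> hji; rewrite /pdrop subnK. Qed.

Lemma is_ipath_ptail q : is_ipath q -> is_ipath (ptail q).
Proof. by move=> hq i; apply: hq. Qed.

Lemma is_ipath_pcons e q : rg e = sc (q 0%N) -> is_ipath q -> is_ipath (pcons e q).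
Proof. by move=> he hq [|i] /=; rewrite ?he ?hq. Qed.

Section TailClass.
Variable c : ipath.
Hypothesis c_path : is_ipath c.

Definition in_class q := is_ipath q /\ tail_equiv q c.

Lemma in_class_c : in_class c.
Proof. by split=> //; exists 0%N, 0%N. Qed.

Lemma in_class_ptail q : in_class q -> in_class (ptail q).
Proof.
case=> /is_ipath_ptail hq [a [b hab]]; split=> //.
by exists a, b.+1; rewrite pdrop_ptail -!ptail_pdrop hab.
Qed.

Lemma in_class_pcons e q : rg e = sc (q 0%N) -> in_class q -> in_class (pcons e q).
Proof.
move=> he [hq [a [b hab]]]; split; first exact: is_ipath_pcons.
by exists a.+1, b; rewrite pdropS_pcons.
Qed.

Lemma in_class_pdrop j q : in_class q -> in_class (pdrop j q).
Proof.
move=> hq; elim: j => [|j IH]; first by rewrite pdrop0.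
by rewrite -ptail_pdrop; apply: in_class_ptail.
Qed.

Section Transfer.
Variable Q : ipath -> Prop.
Hypothesis Q_ptail : forall p, in_class p -> Q p -> Q (ptail p).
Hypothesis Q_pcons : forall e p, in_class (pcons e p) -> Q p -> Q (pcons e p).

Lemma transfer_pdrop j p : in_class p -> Q p -> Q (pdrop j p).
Proof.
move=> hp; elim: j => [|j IH] hQ; first by rewrite pdrop0.
by rewrite -ptail_pdrop; apply: Q_ptail (IH hQ); apply: in_class_pdrop.
Qed.

Lemma transfer_pdrop_inv j p : in_class p -> Q (pdrop j p) -> Q p.
Proof.
move=> hp; elim: j => [|j IH] hQ; first by rewrite pdrop0 in hQ.
apply: IH; rewrite -pcons_pdrop; apply: Q_pcons => //.
by rewrite pcons_pdrop; apply: in_class_pdrop.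
Qed.

Lemma in_class_transfer p p' : in_class p -> in_class p' -> Q p -> Q p'.
Proof.
move=> hp hp' hQ.
have hQc : Q c.
  case: (hp) => _ [a [b hab]].
  by apply: (@transfer_pdrop_inv b c in_class_c); rewrite -hab; apply: transfer_pdrop.
case: (hp') => _ [a [b hab]].
by apply: (@transfer_pdrop_inv a p' hp'); rewrite hab; apply: transfer_pdrop in_class_c _.
Qed.

End Transfer.
End TailClass.
End InfinitePaths.

Lemma finite_separation (T : Type) (l : list (nat -> T)) q0 :
  exists N, forall q, In q l -> q <> q0 -> exists2 i, (i < N)%N & q i <> q0 i.
Proof.
elim: l => [|q l [N IH]]; first by exists 0%N.
have [->|hne] := pselect (q = q0); first by exists N => q' [<- /(_ erefl) []|/IH].
have [i0 hi0] : exists i, q i <> q0 i.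
  apply: contrapT => hn; apply: hne; apply: funext => i.
  by apply: contrapT => h; apply: hn; exists i.
exists (maxn N i0.+1) => q' [<- _|h1 h2]; first by exists i0 => //; rewrite leq_max leqnn orbT.
by case: (IH _ h1 h2) => i hi hne'; exists i => //; rewrite leq_max hi.
Qed.

Lemma sum_nodup_indicator (T : Type) (V : nmodType) (l : list T) (z : T) (a : V) :
  NoDup l -> \sum_(e <- l) (if `[< z = e >] then a else 0) = if `[< In z l >] then a else 0.
Proof.
elim: l => [|e l IH] hl; first by rewrite big_nil asboolF.
have /NoDup_cons_iff [he /IH IHl] := hl.
rewrite big_cons IHl; case: asboolP => [->|hez].
  by rewrite (asboolF he) addr0 asboolT //; left.
by rewrite add0r /= asbool_or (asboolF (P := e = z)) // => /esym.
Qed.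

Definition simple_twist (k : fieldType) (K : lmodType k) (M : K -> K) :=
  forall U : K -> Prop, subspace U -> (forall b, U b -> U (M b)) ->
  forall b, U b -> b <> 0 -> forall b', U b'.

Lemma subspace_preim (k : fieldType) (V1 V2 : lmodType k) (f : {linear V1 -> V2})
    (W : V2 -> Prop) :
  subspace W -> subspace (fun x => W (f x)).
Proof.
move=> [W0 [WD WZ]]; split; first by rewrite linear0.
by split=> [x y hx hy|a x hx]; [rewrite linearD; apply: WD | rewrite linearZ; apply: WZ].
Qed.

Section Twists.
Variable k : fieldType.

Lemma simple_twist_line (M : k^o -> k^o) : simple_twist M.
Proof.
move=> U [_ [_ UZ]] _ b Ub b0 b'.
have -> : b' = (b' / b) *: b by rewrite /GRing.scale /= mulfVK //; apply/eqP.
exact: UZ.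
Qed.

Lemma scale_fixed_eq0 (K : lmodType k) (a : k) (y : K) : a != 1 -> a *: y = y -> y = 0.
Proof.
move=> ha1 hy; apply/eqP; have : (a - 1) *: y == 0 by rewrite scalerBl hy scale1r subrr.
by rewrite scaler_eq0 subr_eq0 (negbTE ha1).
Qed.

(* Multiplication by a in F_2[a] = F_4 (a^2 = a + 1), with (x, y) standing for x + y a. *)
Definition rot (x : k^o * k^o) : k^o * k^o := (x.2, x.1 + x.2).

Fact rot_linear : linear rot.
Proof. by move=> a [x1 x2] [y1 y2]; congr pair; rewrite /= scalerDr addrACA. Qed.
HB.instance Definition _ :=
  GRing.isLinear.Build k (k^o * k^o)%type (k^o * k^o)%type *:%R rot rot_linear.

Lemma rot_fixed x : rot x = x -> x = 0.
Proof.
case: x => x1 x2 [e21 e12].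
have e1 : x1 = 0 by apply: (addIr x2); rewrite add0r.
by rewrite e21 e1.
Qed.

Section CharTwo.
Hypothesis k01 : forall a : k, a = 0 \/ a = 1.

Lemma addrr_char2 (a : k) : a + a = 0.
Proof.
have two : 1 + 1 = 0 :> k.
  case: (k01 (1 + 1)) => // /eqP; rewrite -subr_eq0 addrK => /eqP h.
  by move: (@oner_neq0 k); rewrite h eqxx.
by rewrite -{1 2}(mul1r a) -mulrDl two mul0r.
Qed.

Lemma rot3 x : rot (rot (rot x)) = x.
Proof.
case: x => x1 x2; rewrite /rot /=; congr pair.
  by rewrite addrCA addrr_char2 addr0.
by rewrite [x2 + _]addrCA addrr_char2 addr0 addrAC addrr_char2 add0r.
Qed.

Lemma rot_simple : simple_twist rot.
Proof.
move=> U [_ [UD UZ]] Urot b Ub b0 b'.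
have he1 : U (1, 0).
  case: b Ub b0 => b1 b2; case: (k01 b1) => ->; case: (k01 b2) => -> Ub b0.
  - by case: b0.
  - by have := Urot _ (Urot _ Ub); rewrite /rot /= add0r addrr_char2.
  - by [].
  - by have := Urot _ Ub; rewrite /rot /= addrr_char2.
have he2 : U (0, 1) by have := Urot _ he1; rewrite /rot /= addr0.
have -> : b' = b'.1 *: (1, 0) + b'.2 *: (0, 1).
  by case: b' => x y; congr pair; rewrite /= scaler0 ?addr0 ?add0r /GRing.scale /= mulr1.
by apply: UD; apply: UZ.
Qed.

End CharTwo.

Lemma exists_simple_twist : exists (K : lmodType k) (M Minv : {linear K -> K}),
  [/\ cancel M Minv, cancel Minv M, forall y, M y = y -> y = 0, simple_twist M
    & exists y : K, y <> 0].
Proof.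
have [[a [ha0 ha1]]|hk] := pselect (exists a : k, a != 0 /\ a != 1).
  exists k^o, ( *:%R a), ( *:%R a^-1); split.
  - by move=> y /=; rewrite scalerA mulVf ?scale1r.
  - by move=> y /=; rewrite scalerA mulfV ?scale1r.
  - by move=> y; apply: scale_fixed_eq0.
  - exact: simple_twist_line.
  - by exists 1; apply/eqP; apply: oner_neq0.
have k01 (a : k) : a = 0 \/ a = 1.
  have [/eqP|ha0] := boolP (a == 0); first by left.
  have [/eqP|ha1] := boolP (a == 1); first by right.
  by case: hk; exists a.
exists (k^o * k^o)%type, rot, (rot \o rot); split.
- exact: rot3.
- exact: rot3.
- exact: rot_fixed.
- exact: rot_simple.
- by exists (1, 0) => /(congr1 fst) /eqP; rewrite oner_eq0.
Qed.

End Twists.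

Section ChenModule.
Variables (E : graph) (k : fieldType) (c : ipath E) (K : lmodType k).

Definition supported (g : ipath E -> K) :=
  exists l : list (ipath E), forall q, g q <> 0 -> In q l /\ in_class c q.

(* The twisted Chen module: K-valued functions of finite support on the tail
   class of [c], i.e. the span of that class tensored with [K]. *)
Record cvec := CVec { cv :> ipath E -> K; cv_supp : supported cv }.

Lemma cv_finite (x : cvec) : exists l, forall q, x q <> 0 -> In q l.
Proof. by case: (cv_supp x) => l hl; exists l => q /hl []. Qed.

Lemma cv_class (x : cvec) q : x q <> 0 -> in_class c q.
Proof. by case: (cv_supp x) => l hl /hl []. Qed.

Lemma cvec_ext (x y : cvec) : (forall q, x q = y q) -> x = y.
Proof.
case: x y => [f1 h1] [f2 h2] /= /funext e; subst f2.
by congr CVec; apply: Prop_irrelevance.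
Qed.

HB.instance Definition _ := gen_eqMixin cvec.
HB.instance Definition _ := gen_choiceMixin cvec.

Lemma supported_image (x : cvec) (g : ipath E -> K) (h : ipath E -> ipath E) :
    (forall q, g q <> 0 ->
       exists q', [/\ x q' <> 0, q = h q' & in_class c q' -> in_class c q]) ->
  supported g.
Proof.
move=> hg; case: (cv_finite x) => l hl; exists (map h l) => q /hg [q' [hq' -> hc]].
by split; [apply: in_map; apply: hl | apply: hc; apply: cv_class hq'].
Qed.

Fact cvec0_subproof : supported (fun=> 0).
Proof. by exists nil. Qed.

Fact cvec_add_subproof (x y : cvec) : supported (fun q => x q + y q).
Proof.
case: (cv_supp x) (cv_supp y) => [l1 h1] [l2 h2]; exists (l1 ++ l2) => q hq.
have [hx|hx] := pselect (x q = 0).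
  have hy : y q <> 0 by rewrite hx add0r in hq.
  by case: (h2 _ hy) => ? ?; split=> //; apply/in_or_app; right.
by case: (h1 _ hx) => ? ?; split=> //; apply/in_or_app; left.
Qed.

Fact cvec_scale_subproof a (x : cvec) : supported (fun q => a *: x q).
Proof.
apply: (supported_image (x := x) (h := id)) => q hq.
by exists q; split=> // hx; apply: hq; rewrite hx scaler0.
Qed.

Definition cvec0 := CVec cvec0_subproof.
Definition cvec_add x y := CVec (cvec_add_subproof x y).
Definition cvec_scale a x := CVec (cvec_scale_subproof a x).
Definition cvec_opp x := cvec_scale (-1) x.

Fact cvec_addA : associative cvec_add.
Proof. by move=> x y z; apply: cvec_ext => q /=; rewrite addrA. Qed.
Fact cvec_addC : commutative cvec_add.
Proof. by move=> x y; apply: cvec_ext => q /=; rewrite addrC. Qed.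
Fact cvec_add0 : left_id cvec0 cvec_add.
Proof. by move=> x; apply: cvec_ext => q /=; rewrite add0r. Qed.
Fact cvec_addN : left_inverse cvec0 cvec_opp cvec_add.
Proof. by move=> x; apply: cvec_ext => q /=; rewrite scaleN1r addNr. Qed.
HB.instance Definition _ :=
  GRing.isZmodule.Build cvec cvec_addA cvec_addC cvec_add0 cvec_addN.

Fact cvec_scaleA a b x : cvec_scale a (cvec_scale b x) = cvec_scale (a * b) x.
Proof. by apply: cvec_ext => q /=; rewrite scalerA. Qed.
Fact cvec_scale1 : left_id 1 cvec_scale.
Proof. by move=> x; apply: cvec_ext => q /=; rewrite scale1r. Qed.
Fact cvec_scaleDr : right_distributive cvec_scale +%R.
Proof. by move=> a x y; apply: cvec_ext => q /=; rewrite scalerDr. Qed.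
Fact cvec_scaleDl x : {morph cvec_scale^~ x : a b / a + b}.
Proof. by move=> a b; apply: cvec_ext => q /=; rewrite scalerDl. Qed.
HB.instance Definition _ :=
  GRing.Zmodule_isLmodule.Build k cvec cvec_scaleA cvec_scale1 cvec_scaleDr cvec_scaleDl.

Lemma cvecD (x y : cvec) q : (x + y) q = x q + y q. Proof. by []. Qed.
Lemma cvec0E q : (0 : cvec) q = 0. Proof. by []. Qed.
Lemma cvecB (x y : cvec) q : (x - y) q = x q - y q.
Proof. by rewrite cvecD /= scaleN1r. Qed.
Lemma cvec_sum (I : Type) (l : list I) (F : I -> cvec) q :
  (\sum_(i <- l) F i) q = \sum_(i <- l) F i q.
Proof. by elim: l => [|a l IH]; rewrite ?big_nil // !big_cons cvecD IH. Qed.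

Variables (M Minv : {linear K -> K}).
Hypotheses (MK : cancel M Minv) (MinvK : cancel Minv M).

(* Prepending an edge multiplies by [M] exactly when the resulting path is [c]. *)
Definition twist q : {linear K -> K} := if `[< q = c >] then M else idfun.
Definition untwist q : {linear K -> K} := if `[< q = c >] then Minv else idfun.

Lemma twistK q : cancel (twist q) (untwist q).
Proof. by rewrite /twist /untwist; case: asboolP. Qed.

Lemma untwistK q : cancel (untwist q) (twist q).
Proof. by rewrite /twist /untwist; case: asboolP. Qed.

Lemma twist_neq0 q y : y <> 0 -> twist q y <> 0.
Proof. by move=> hy /(congr1 (untwist q)); rewrite twistK linear0. Qed.

Lemma untwist_neq0 q y : y <> 0 -> untwist q y <> 0.
Proof. by move=> hy /(congr1 (twist q)); rewrite untwistK linear0. Qed.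

Fact chenP_subproof v (x : cvec) :
  supported (fun q => if `[< v = sc (q 0%N) >] then x q else 0).
Proof.
by apply: (supported_image (x := x) (h := id)) => q; case: asboolP => // _ hq; exists q.
Qed.

Fact chenS_subproof e (x : cvec) :
  supported (fun q =>
    if `[< q 0%N = e /\ rg e = sc (q 1%N) >] then twist q (x (ptail q)) else 0).
Proof.
apply: (supported_image (x := x) (h := pcons e)) => q.
case: asboolP => // [[h0 h1]] hq; exists (ptail q); split.
- by move=> hx; apply: hq; rewrite hx linear0.
- by rewrite -h0 pcons_ptail.
- by move=> hc; rewrite -(pcons_ptail q) h0; apply: in_class_pcons.
Qed.

Fact chenSs_subproof e (x : cvec) :
  supported (fun q =>
    if `[< rg e = sc (q 0%N) >] then untwist (pcons e q) (x (pcons e q)) else 0).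
Proof.
apply: (supported_image (x := x) (h := @ptail E)) => q.
case: asboolP => // h hq; exists (pcons e q); split=> //; last exact: in_class_ptail.
by move=> hx; apply: hq; rewrite hx linear0.
Qed.

Definition chenP v x := CVec (chenP_subproof v x).
Definition chenS e x := CVec (chenS_subproof e x).
Definition chenSs e x := CVec (chenSs_subproof e x).

Fact chenP_linear v : linear (chenP v).
Proof. by move=> a x y; apply: cvec_ext => q /=; case: asboolP; rewrite ?scaler0 ?addr0. Qed.
Fact chenS_linear e : linear (chenS e).
Proof.
by move=> a x y; apply: cvec_ext => q /=; case: asboolP; rewrite ?linearP ?scaler0 ?addr0.
Qed.
Fact chenSs_linear e : linear (chenSs e).
Proof.
by move=> a x y; apply: cvec_ext => q /=; case: asboolP; rewrite ?linearP ?scaler0 ?addr0.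
Qed.
HB.instance Definition _ v := GRing.isLinear.Build k cvec cvec *:%R (chenP v) (chenP_linear v).
HB.instance Definition _ e := GRing.isLinear.Build k cvec cvec *:%R (chenS e) (chenS_linear e).
HB.instance Definition _ e :=
  GRing.isLinear.Build k cvec cvec *:%R (chenSs e) (chenSs_linear e).

Lemma chenP_idem v x : chenP v (chenP v x) = chenP v x.
Proof. by apply: cvec_ext => q /=; case: asboolP. Qed.

Lemma chenP_orth v w x : v <> w -> chenP v (chenP w x) = 0.
Proof.
move=> vw; apply: cvec_ext => q /=.
by case: asboolP => // hv; case: asboolP => // hw; case: vw; rewrite hv hw.
Qed.

Lemma chenS_src e x : chenP (sc e) (chenS e x) = chenS e x.
Proof.
apply: cvec_ext => q /=; case: (asboolP (q 0%N = e /\ _)) => [[h0 _]|_].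
  by rewrite h0 asboolT.
by rewrite if_same.
Qed.

Lemma chenS_rg e x : chenS e (chenP (rg e) x) = chenS e x.
Proof. by apply: cvec_ext => q /=; case: asboolP => // [[_ h1]]; rewrite asboolT. Qed.

Lemma chenSs_rg e x : chenP (rg e) (chenSs e x) = chenSs e x.
Proof. by apply: cvec_ext => q /=; case: asboolP. Qed.

Lemma chenSs_src e x : chenSs e (chenP (sc e) x) = chenSs e x.
Proof. by apply: cvec_ext => q /=; rewrite (asboolT (erefl (sc e))). Qed.

Lemma chenSs_chenS e x : chenSs e (chenS e x) = chenP (rg e) x.
Proof. by apply: cvec_ext => q /=; case: asboolP => // h; rewrite asboolT ?twistK. Qed.

Lemma chenSs_chenS_neq e f x : e <> f -> chenSs e (chenS f x) = 0.
Proof.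
by move=> ef; apply: cvec_ext => q /=; case: asboolP => // _; rewrite asboolF ?linear0 // => [[]].
Qed.

Lemma chenS_chenSs e x q :
  chenS e (chenSs e x) q = if `[< q 0%N = e /\ rg e = sc (q 1%N) >] then x q else 0.
Proof.
rewrite /=; case: asboolP => // [[h0 h1]].
by rewrite asboolT // -h0 pcons_ptail untwistK.
Qed.

Lemma chen_CK2 v l x : emits_list v l -> chenP v x = \sum_(e <- l) chenS e (chenSs e x).
Proof.
move=> [hl hv]; apply: cvec_ext => q; rewrite cvec_sum.
have hterm e : chenS e (chenSs e x) q = if `[< q 0%N = e >] then x q else 0.
  rewrite chenS_chenSs; have [->|/cv_class [hpath _]] := pselect (x q = 0).
    by rewrite !if_same.
  rewrite (@asbool_equiv_eq _ (q 0%N = e)) //.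
  by split=> [[]//|<-]; split=> //; apply: hpath.
rewrite (eq_bigr _ (fun e _ => hterm e)) sum_nodup_indicator //=.
rewrite (@asbool_equiv_eq _ (In (q 0%N) l)) //.
by split=> [hv0|/hv <-] //; apply/hv; rewrite hv0.
Qed.

(* Paths are infinite, so the last relation also holds at sinks. *)
Definition chen_rep : lpa_rep E cvec :=
  @LpaRep E k cvec (fun v => chenP v) (fun e => chenS e) (fun e => chenSs e)
    chenP_idem chenP_orth chenS_src chenS_rg chenSs_rg chenSs_src chenSs_chenS
    chenSs_chenS_neq (fun v l x _ => chen_CK2 x).

Fact cdelta_subproof p b : supported (fun q => if `[< q = p /\ in_class c p >] then b else 0).
Proof. by exists [:: p] => q; case: asboolP => // [[-> hp]] _; split=> //; left. Qed.

Definition cdelta p b := CVec (cdelta_subproof p b).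

Fact cdelta_linear p : linear (cdelta p).
Proof. by move=> a b1 b2; apply: cvec_ext => q /=; case: asboolP; rewrite ?scaler0 ?addr0. Qed.
HB.instance Definition _ p := GRing.isLinear.Build k K cvec *:%R (cdelta p) (cdelta_linear p).

Lemma chenSs_cdelta p b : in_class c p ->
  chenSs (p 0%N) (cdelta p b) = cdelta (ptail p) (untwist p b).
Proof.
move=> hp; have [hpath _] := hp; apply: cvec_ext => q /=.
have [->|hq] := pselect (q = ptail p).
  by rewrite pcons_ptail !asboolT //; split=> //; apply: in_class_ptail.
rewrite (asboolF (P := q = ptail p /\ _)); last by case.
rewrite (asboolF (P := pcons _ q = p /\ _)) ?linear0 ?if_same //.
by case=> hqp _; apply: hq; rewrite -hqp.
Qed.

Lemma chenS_cdelta e p b : in_class c (pcons e p) ->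
  chenS e (cdelta p b) = cdelta (pcons e p) (twist (pcons e p) b).
Proof.
move=> hp; have [hpath _] := hp; apply: cvec_ext => q /=.
have [->|hq] := pselect (q = pcons e p).
  have hp' : in_class c p := in_class_ptail hp.
  by rewrite !asboolT //; split=> //; apply: (hpath 0%N).
rewrite (asboolF (P := q = pcons e p /\ _)); last by case.
case: asboolP => // [[h0 _]]; rewrite asboolF ?linear0 // => [[hqp _]]; apply: hq.
by rewrite -h0 -hqp pcons_ptail.
Qed.

Lemma span_cdelta (W : cvec -> Prop) : subspace W ->
  (forall p b, in_class c p -> W (cdelta p b)) -> forall x, W x.
Proof.
move=> [W0 [WD _]] hW x; case: (cv_finite x) => l.
elim: l x => [|q l IH] x hx.
  suff -> : x = 0 by [].
  by apply: cvec_ext => q; apply: contrapT => /hx.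
rewrite -(subrK (cdelta q (x q)) x); apply: WD; last first.
  have [->|hq] := pselect (x q = 0); first by rewrite linear0.
  by apply: hW; apply: cv_class hq.
apply: IH => q'; rewrite cvecB /=.
have [->|hne] := pselect (q' = q).
  case: asboolP => [_|hc]; first by rewrite subrr.
  by rewrite subr0 => hxq; case: hc; split=> //; apply: cv_class hxq.
rewrite (asboolF (P := q' = q /\ _)); last by case.
by rewrite subr0 => /hx [/esym|].
Qed.

Hypothesis c_path : is_ipath c.

Section InvariantSubspace.
Variable W : cvec -> Prop.
Hypothesis W_inv : invariant chen_rep W.

Lemma invariant_chenS e x : W x -> W (chenS e x).
Proof. exact: (W_inv (Ts k e)). Qed.

Lemma invariant_chenSs e x : W x -> W (chenSs e x).
Proof. exact: (W_inv (Tst k e)). Qed.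

Lemma invariant_isolate N x q0 : W x -> x q0 <> 0 ->
    (forall q, x q <> 0 -> q <> q0 -> exists2 i, (i < N)%N & q i <> q0 i) ->
  exists p b, [/\ b <> 0, in_class c p & W (cdelta p b)].
Proof.
elim: N x q0 => [|N IH] x q0 hW hx hsep.
  exists q0, (x q0); split=> //; first exact: cv_class hx.
  suff <- : x = cdelta q0 (x q0) by [].
  apply: cvec_ext => q /=; case: asboolP => [[-> _]//|hq].
  apply: contrapT => hxq; apply: hq; split; last exact: cv_class hx.
  by apply: contrapT => hne; case: (hsep _ hxq hne).
apply: (IH (chenSs (q0 0%N) x) (ptail q0)); first exact: invariant_chenSs.
  have [hpath _] := cv_class hx.
  by rewrite /= asboolT ?pcons_ptail; [apply: untwist_neq0 | apply: hpath].
move=> q /=; case: asboolP => // _ hxq hne.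
have hxq' : x (pcons (q0 0%N) q) <> 0 by move=> h; apply: hxq; rewrite h linear0.
have hne' : pcons (q0 0%N) q <> q0 by move=> h; apply: hne; rewrite -h.
by case: (hsep _ hxq' hne') => [[|i] hi hi']; [case: hi' | exists i].
Qed.

Lemma invariant_cdelta x : W x -> x <> 0 ->
  exists p b, [/\ b <> 0, in_class c p & W (cdelta p b)].
Proof.
move=> hW hx0; have [q0 hq0] : exists q0, x q0 <> 0.
  apply: contrapT => hn; apply: hx0; apply: cvec_ext => q.
  by apply: contrapT => h; apply: hn; exists q.
case: (cv_finite x) => l hl; case: (finite_separation l q0) => N hN.
by apply: (invariant_isolate (N := N) hW hq0) => q hq; apply: hN; apply: hl.
Qed.

Lemma invariant_cdelta_c p b : b <> 0 -> in_class c p -> W (cdelta p b) ->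
  exists2 b', b' <> 0 & W (cdelta c b').
Proof.
move=> hb hp hWp.
apply: (in_class_transfer (Q := fun p => exists2 b, b <> 0 & W (cdelta p b)) c_path
  _ _ hp (in_class_c c_path)); last by exists b.
  move=> p' hp' [b' hb' hW']; exists (untwist p' b'); first exact: untwist_neq0.
  by rewrite -chenSs_cdelta //; apply: invariant_chenSs.
move=> e p' hp' [b' hb' hW']; exists (twist (pcons e p') b'); first exact: twist_neq0.
by rewrite -chenS_cdelta //; apply: invariant_chenS.
Qed.

Lemma invariant_cdelta_from_c : (forall b, W (cdelta c b)) ->
  forall p b, in_class c p -> W (cdelta p b).
Proof.
move=> hWc p b hp; move: b.
apply: (in_class_transfer (Q := fun p => forall b, W (cdelta p b)) c_path
  _ _ (in_class_c c_path) hp hWc).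
  move=> p1 hp1 hQ b; rewrite -(twistK p1 b) -chenSs_cdelta //.
  exact: invariant_chenSs.
move=> e p1 hp1 hQ b; rewrite -(untwistK (pcons e p1) b) -chenS_cdelta //.
exact: invariant_chenS.
Qed.

End InvariantSubspace.

Section CycleOperator.
Variable d : nat.
Hypotheses (d_gt0 : (0 < d)%N) (c_period : pdrop d c = c)
  (c_min_period : forall j, (0 < j)%N -> (j < d)%N -> pdrop j c <> c).

Fixpoint path_term m : lterm E k :=
  if m is m'.+1 then Tmul (path_term m') (Ts k (c m)) else Ts k (c 0%N).

Definition cycle_term := path_term d.-1.

Local Notation act a := (rep_eval chen_rep a).

Lemma chenS_support e y q : chenS e y q <> 0 -> q 0%N = e /\ y (ptail q) <> 0.
Proof.
rewrite /=; case: asboolP => // [[h0 _]] h.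
by split=> // hy; apply: h; rewrite hy linear0.
Qed.

Lemma path_term_support m y q : act (path_term m) y q <> 0 ->
  (forall i, (i <= m)%N -> q i = c i) /\ y (pdrop m.+1 q) <> 0.
Proof.
elim: m y q => [|m IH] y q /=.
  move/chenS_support=> [h0 hy]; split; first by case.
  by rewrite -pdrop_ptail pdrop0.
move/IH=> [hq /chenS_support [h0 hy]]; split; last by rewrite -ptail_pdrop.
move=> i; rewrite leq_eqVlt => /orP [/eqP ->|]; last exact: hq.
by rewrite -h0 /pdrop add0n.
Qed.

(* As [d] is the least period, [pdrop j c <> c] for [0 < j < d]: the twist is
   applied once, at the last step. *)
Lemma path_term_at_c m y : (m < d)%N -> act (path_term m) y c = M (y (pdrop m.+1 c)).
Proof.
elim: m y => [|m IH] y hm /=.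
  rewrite asboolT; last by split=> //; apply: c_path.
  by rewrite /twist asboolT // -pdrop_ptail pdrop0.
rewrite IH 1?ltnW //= asboolT; last by split=> //; apply: c_path.
by rewrite /twist asboolF ?ptail_pdrop //; apply: c_min_period.
Qed.

Lemma cycle_term_support y q : act cycle_term y q <> 0 ->
  (forall i, (i < d)%N -> q i = c i) /\ y (pdrop d q) <> 0.
Proof.
move/path_term_support; rewrite prednK // => -[hq hy]; split=> // i hi.
by apply: hq; rewrite -ltnS prednK.
Qed.

Lemma cycle_term_cdelta b : act cycle_term (cdelta c b) = cdelta c (M b).
Proof.
apply: cvec_ext => q; have [->|hq] := pselect (q = c).
  rewrite path_term_at_c ?prednK ?c_period //= ?ltn_predL //.
  by rewrite !asboolT //; split=> //; apply: in_class_c.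
rewrite /= (asboolF (P := q = c /\ _)); last by case.
apply: contrapT => /cycle_term_support [hqc]; rewrite /=.
case: asboolP => // [[hdq _]] _; apply: hq; apply: funext => i.
have [|hid] := ltnP i d; first exact: hqc.
by rewrite -(pdrop_sub q hid) hdq -(pdrop_sub c hid) c_period.
Qed.

Lemma cycle_term_fixed : (forall y, M y = y -> y = 0) ->
  forall y, act cycle_term y = y -> y = 0.
Proof.
move=> hM y hy.
have hyc : y c = 0.
  by apply: hM; rewrite -{2}hy path_term_at_c ?prednK ?c_period // ltn_predL.
have hagree m q : y q <> 0 -> forall i, (i < d * m)%N -> q i = c i.
  elim: m q => [|m IH] q hq i hi; first by rewrite muln0 in hi.
  rewrite -hy in hq; have [hqc hdq] := cycle_term_support hq.
  have [|hid] := ltnP i d; first exact: hqc.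
  rewrite -(pdrop_sub q hid) -(pdrop_sub c hid) c_period; apply: (IH _ hdq).
  by move: hi; rewrite mulnS; lia.
apply: cvec_ext => q; rewrite cvec0E; apply: contrapT => hq.
suff hqc : q = c by rewrite hqc in hq.
by apply: funext => i; apply: (hagree i.+1 q hq); rewrite leq_pmull.
Qed.

Theorem chen_irreducible : simple_twist M -> (exists b : K, b <> 0) -> irreducible chen_rep.
Proof.
move=> hsimple [b0 hb0]; split.
  exists (Tp k (sc (c 0%N))), (cdelta c b0) => /(congr1 (fun z : cvec => z c)) /=.
  by rewrite !asboolT //; split=> //; apply: in_class_c.
move=> W hW hinv.
have [[x [hx hx0]]|hnone] := pselect (exists x, W x /\ x <> 0); last first.
  by left=> x hx; apply: contrapT => h; apply: hnone; exists x.
right; have [p [b [hb hp hWp]]] := invariant_cdelta hinv hx hx0.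
have [b1 hb1 hWc] := invariant_cdelta_c hinv hb hp hWp.
have hWc_all b' : W (cdelta c b').
  apply: (hsimple _ (subspace_preim (cdelta c) hW)) hWc hb1 _ => b'' hb''.
  by rewrite /= -cycle_term_cdelta; apply: hinv.
exact: span_cdelta (invariant_cdelta_from_c hinv hWc_all).
Qed.

End CycleOperator.
End ChenModule.

Section NonEquivalence.
Variables (E : graph) (k : fieldType) (c : ipath E) (d : nat).
Hypotheses (c_path : is_ipath c) (d_gt0 : (0 < d)%N) (c_period : pdrop d c = c)
  (c_min_period : forall j, (0 < j)%N -> (j < d)%N -> pdrop j c <> c).

Let idK : cancel (idfun : {linear k^o -> k^o}) idfun := fun=> erefl.

Definition untwisted_chen_rep := chen_rep c idK idK.

Lemma untwisted_chen_irreducible : irreducible untwisted_chen_rep.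
Proof.
apply: (chen_irreducible _ _ c_path d_gt0 c_period c_min_period).
  exact: simple_twist_line.
by exists 1; apply/eqP; apply: oner_neq0.
Qed.

Lemma twisted_chen_not_equiv (K : lmodType k) (M Minv : {linear K -> K})
    (MK : cancel M Minv) (MinvK : cancel Minv M) :
  (forall y, M y = y -> y = 0) -> ~ alg_equiv (chen_rep c MK MinvK) untwisted_chen_rep.
Proof.
move=> hM [T [Ti [TK [TiK hT]]]].
pose u := cdelta c c (1 : k^o).
have hu : rep_eval untwisted_chen_rep (cycle_term k c d) u = u.
  exact: (cycle_term_cdelta idK idK c_path d_gt0 c_period c_min_period).
have /(cycle_term_fixed c_path d_gt0 c_period c_min_period hM) hTi0 :
    rep_eval (chen_rep c MK MinvK) (cycle_term k c d) (Ti u) = Ti u.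
  by rewrite hT TiK hu.
have /(congr1 (fun z : cvec c k^o => z c)) : u = 0 by rewrite -(TiK u) hTi0 linear0.
by rewrite /= asboolT; [apply/eqP; apply: oner_neq0 | split=> //; apply: in_class_c].
Qed.

End NonEquivalence.

Section PeriodicPath.
Variable E : graph.

Lemma cycle_ipath : has_cycle E ->
  exists (c : ipath E) (n : nat), [/\ is_ipath c, (0 < n)%N & pdrop n c = c].
Proof.
move=> [n [f [n_gt0 [hf hfn]]]]; exists (fun i => f (i %% n)%N), n; split=> //.
  move=> i; have hi : (i %% n < n)%N by rewrite ltn_mod.
  have -> : (i.+1 %% n = (i %% n).+1 %% n)%N by rewrite {1}(divn_eq i n) -addnS modnMDl.
  have [hlt|hge] := ltnP (i %% n).+1 n; first by rewrite (modn_small hlt); apply: hf.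
  have -> : (i %% n = n.-1)%N by lia.
  by rewrite prednK // modnn hfn.
by apply: funext => i; rewrite /pdrop modnDr.
Qed.

Lemma min_period (c : ipath E) n : (0 < n)%N -> pdrop n c = c ->
  exists d, [/\ (0 < d)%N, pdrop d c = c & forall j, (0 < j)%N -> (j < d)%N -> pdrop j c <> c].
Proof.
move=> n_gt0 hn; have hex : exists m, (0 < m)%N && `[< pdrop m c = c >].
  by exists n; rewrite n_gt0 asboolT.
case: (ex_minnP hex) => d /andP [d_gt0 /asboolP hd] hmin.
exists d; split=> // j j_gt0 hjd hj.
by have := hmin j; rewrite j_gt0 asboolT // leqNgt hjd => /(_ isT).
Qed.

End PeriodicPath.

Theorem lemma4p5 (E : graph) (k : fieldType) :
  (forall (V1 V2 : lmodType k) (rho1 : lpa_rep E V1) (rho2 : lpa_rep E V2),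
      irreducible rho1 -> irreducible rho2 -> alg_equiv rho1 rho2) ->
  ~ has_cycle E.
Proof.
move=> H /cycle_ipath [c [n [c_path n_gt0 hn]]].
have [d [d_gt0 c_period c_min_period]] := min_period n_gt0 hn.
have [K [M [Minv [MK MinvK hM hsimple hK]]]] := exists_simple_twist k.
apply: (twisted_chen_not_equiv c_path d_gt0 c_period c_min_period (MK := MK) (MinvK := MinvK) hM).
apply: H.
  exact: (chen_irreducible MK MinvK c_path d_gt0 c_period c_min_period hsimple hK).
exact: (untwisted_chen_irreducible k c_path d_gt0 c_period c_min_period).
Qed.
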